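(* Let $K$ be a field, $X$ a finite connected poset, $\varphi$ an elementary Lie automorphism of $I(X,K)$ and $\theta=\theta_\varphi$. For any maximal chain $u_1<u_2<\dots<u_m$ in $X$ there exists a maximal chain $v_1<v_2<\dots<v_m$ in $X$ such that either (1) $\theta(e_{u_iu_j})=e_{v_iv_j}$ for all $1\le i<j\le m$, or (2) $\theta(e_{u_iu_j})=e_{v_{m-j+1}v_{m-i+1}}$ for all $1\le i<j\le m$.
   Context: $I(X,K)$ is the incidence algebra: functions $f:X\times X\to K$ with $f(x,y)=0$ unless $x\le y$, product $(fg)(x,y)=\sum_{x\le t\le y}f(x,t)g(t,y)$; $e_{xy}$ ($x\le y$) is the basis element equal to $1$ at $(x,y)$ and $0$ elsewhere. $B=\{e_{xy}:x<y\}$. A Lie automorphism is a bijective linear map preserving $[f,g]=fg-gf$. With $l(\lfloor x,y\rfloor)$ the maximal length of a chain in $\{z:x\le z\le y\}$ and $L_i=\mathrm{span}_K\{e_{xy}:l(\lfloor x,y\rfloor)=i\}$, for a Lie automorphism $\psi$ let $\widetilde\psi$ send $e_{xy}\in L_i$ to the $L_i$-component of $\psi(e_{xy})$. A Lie automorphism $\varphi$ is elementary if $\varphi=\widetilde\psi$ for some Lie automorphism $\psi$. For elementary $\varphi$, for each $x<y$ there are a unique $e_{uv}\in B$ and $k\in K^*$ with $\varphi(e_{xy})=k e_{uv}$; set $\theta_\varphi(e_{xy})=e_{uv}$. Connected means any two elements are joined by a sequence in which consecutive elements are in a covering relation. *)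

From HB Require Import structures.
From mathcomp Require Import all_boot all_order all_algebra.
Set Implicit Arguments. Unset Strict Implicit. Unset Printing Implicit Defensive.
Import Order.Theory GRing.Theory.
Local Open Scope order_scope.

(* X is a finite poset [T : finPOrderType d]; elements of the
   incidence algebra I(X,K) are functions f : T -> T -> K vanishing off {x <= y}. *)

Section Incidence.
Variables (d : Order.disp_t) (T : finPOrderType d) (K : fieldType).

Definition inI (f : T -> T -> K) : Prop := forall x y, ~~ (x <= y) -> f x y = 0%R.

Definition mulI (f g : T -> T -> K) : T -> T -> K :=
  fun x y => (\sum_(t : T | ((x <= t) && (t <= y))%O) f x t * g t y)%R.

Definition lieI (f g : T -> T -> K) : T -> T -> K :=
  fun x y => (mulI f g x y - mulI g f x y)%R.

Definition eI (x y : T) : T -> T -> K :=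
  fun u v => if (u == x) && (v == y) then 1%R else 0%R.

(* a Lie automorphism of I(X,K): a map I -> I (values outside I are irrelevant)
   that is linear, bijective and preserves the bracket *)
Definition is_lie_aut (psi : (T -> T -> K) -> (T -> T -> K)) : Prop :=
  [/\ (forall f, inI f -> inI (psi f)),
      (forall (a : K) f g, inI f -> inI g ->
          psi (fun x y => a * f x y + g x y)%R = (fun x y => a * psi f x y + psi g x y)%R),
      (forall f g, inI f -> inI g -> psi f = psi g -> f = g),
      (forall g, inI g -> exists f, inI f /\ psi f = g) &
      (forall f g, inI f -> inI g -> psi (lieI f g) = lieI (psi f) (psi g))].

Definition chain_in (x y : T) (S : {set T}) : bool :=
  [forall u, [forall v, (u \in S) ==> (v \in S) ==> (u >=< v)]] &&
  [forall u, (u \in S) ==> (x <= u) && (u <= y)].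

Definition lng (x y : T) : nat := ((\max_(S : {set T} | chain_in x y S) #|S|)%N).-1.

Definition compL (i : nat) (f : T -> T -> K) : T -> T -> K :=
  fun u v => if (u <= v) && (lng u v == i) then f u v else 0%R.

(* phi is elementary: phi = psi~ for some Lie automorphism psi, where psi~ is the
   linear map sending e_xy (in L_{l(x,y)}) to the L_{l(x,y)}-component of psi(e_xy) *)
Definition elementary (phi : (T -> T -> K) -> (T -> T -> K)) : Prop :=
  is_lie_aut phi /\
  exists psi, is_lie_aut psi /\
    forall x y, x <= y -> phi (eI x y) = compL (lng x y) (psi (eI x y)).

(* theta_phi(e_xy) = e_uv  iff  phi(e_xy) = k e_uv with k <> 0 and u < v;
   returns the pair (u,v) if such exists (it is unique), None otherwise *)
Definition theta (phi : (T -> T -> K) -> (T -> T -> K)) (x y : T) : option (T * T) :=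
  [pick p : T * T | [&& p.1 < p.2, phi (eI x y) p.1 p.2 != 0%R &
     [forall q : T * T, (q != p) ==> (phi (eI x y) q.1 q.2 == 0%R)]]].

Definition covers (x y : T) : bool := (x < y) && [forall z, ~~ ((x < z) && (z < y))].

Definition connectedP : Prop :=
  forall x y : T, exists s : seq T,
    path (fun a b => covers a b || covers b a) x s /\ last x s = y.

Definition max_chain (s : seq T) : Prop :=
  sorted (fun a b => a < b) s /\
  forall z, z \notin s -> exists2 w, w \in s & ~~ (z >=< w).

End Incidence.

From HB Require Import structures.
From mathcomp Require Import all_boot all_order all_algebra.
From mathcomp Require Import zify.
From Stdlib Require Import FunctionalExtensionality.
Import Order.Theory GRing.Theory.
Local Open Scope order_scope.

(* An elementary Lie automorphism phi maps every e_xy with x < y to a nonzero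
   multiple of a single e_ab with a < b: phi(e_xy) is a common eigenvector of
   ad phi(d_s) for the diagonal preimages d_s of the e_ss, and these eigenvalues
   recover (a, b).  Since [e_xy, e_yz] = e_xz, the induced bijection theta on
   strict pairs sends (x, z) to the composite of theta(x, y) and theta(y, z),
   taken in one order or the other, and theta^-1 behaves likewise.  Along a chain
   u_1 < ... < u_m the order of composition cannot switch between consecutive
   steps, so theta(u_i, u_j) is (v_i, v_j) for all i < j, or its mirror image, for
   a chain v.  Finally v is maximal: a longer chain through v would be pulled back
   by theta^-1 to a chain strictly containing u. *)

Section GluedPairs.
Context {dd : Order.disp_t} {A : porderType dd}.
Implicit Types (p q r : A * A) (f : nat -> nat -> A * A) (F : A -> A -> A * A).

Definition glued p q r : Prop :=
  (p.2 = q.1 /\ r = (p.1, q.2)) \/ (q.2 = p.1 /\ r = (q.1, p.2)).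

Lemma gluedC p q r : glued p q r -> glued q p r.
Proof. by case=> h; [right | left]. Qed.

Lemma lt_pair_cycle {p q} : p.1 < p.2 -> q.1 < q.2 -> p.2 = q.1 -> q.2 = p.1 -> False.
Proof. by move=> lt_p + pq qp; rewrite -pq qp => /(lt_trans lt_p); rewrite ltxx. Qed.

Definition lt_family n f := forall i j, (i < j < n)%N -> (f i j).1 < (f i j).2.

Definition glued_family n f :=
  forall i j k, (i < j)%N -> (j < k)%N -> (k < n)%N -> glued (f i j) (f j k) (f i k).

Section Family.
Context {n : nat} {f : nat -> nat -> A * A}.
Hypotheses (f_lt : lt_family n f) (f_glued : glued_family n f).

Lemma family_chain (x0 : A) :
  (forall i, (i.+2 < n)%N -> (f i i.+1).2 = (f i.+1 i.+2).1) ->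
  exists w : seq A, [/\ size w = n, sorted <%O w &
    forall i j, (i < j < n)%N -> f i j = (nth x0 w i, nth x0 w j)].
Proof.
move=> f_step.
pose W i := if i is k.+1 then (f k k.+1).2 else (f 0 1).1.
have W_fst i : (i.+1 < n)%N -> W i = (f i i.+1).1 by case: i => [|k] //= /f_step.
have fW j i : (i < j < n)%N -> f i j = (W i, W j).
  elim: j i => [|j IHj] i // /andP[ij jn].
  have [lt_ij | gt_ij | eq_ij] := ltngtP i j; last first.
  - by rewrite eq_ij W_fst // -eq_ij [in RHS]/W -surjective_pairing.
  - by move: ij; rewrite ltnS leqNgt gt_ij.
  have Ef := IHj i ltac:(lia).
  have [[_ ->] | [ji _]] := f_glued _ _ _ lt_ij (ltnSn j) jn; first by rewrite Ef.
  exfalso; apply: (lt_pair_cycle (f_lt i j ltac:(lia)) (f_lt j j.+1 ltac:(lia)) _ ji).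
  by rewrite Ef /= W_fst.
exists (mkseq W n); split; first by rewrite size_mkseq.
  apply/(sortedP x0) => i; rewrite size_mkseq => lt_in.
  by rewrite !nth_mkseq ?(ltnW lt_in) // [W i]W_fst //; apply: f_lt; lia.
by move=> i j ijn; rewrite !nth_mkseq; [apply: fW | lia | lia].
Qed.

Lemma family_orientationS i : (i.+3 < n)%N ->
  ((f i i.+1).2 == (f i.+1 i.+2).1) = ((f i.+1 i.+2).2 == (f i.+2 i.+3).1).
Proof.
move=> lt_in.
have lt0 := f_lt i i.+1 ltac:(lia); have lt1 := f_lt i.+1 i.+2 ltac:(lia).
have lt2 := f_lt i.+2 i.+3 ltac:(lia).
have g13 := f_glued i i.+1 i.+3 (ltnSn i) ltac:(lia) lt_in.
have [[e0 _] | [e0 _]] := f_glued _ _ _ (ltnSn i) (ltnSn i.+1) ltac:(lia);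
have [[e1 E1] | [e1 E1]] := f_glued _ _ _ (ltnSn i.+1) (ltnSn i.+2) lt_in.
- by rewrite e0 e1 !eqxx.
- exfalso; rewrite E1 /= in g13; case: g13 => [[/= e _] | [/= e _]].
    by move: lt2; rewrite e1 -e0 e ltxx.
  exact: lt_pair_cycle lt0 lt1 e0 e.
- exfalso; rewrite E1 /= in g13; case: g13 => [[/= e _] | [/= e _]].
    exact: lt_pair_cycle lt0 lt1 e e0.
  by move: lt2; rewrite e -e0 e1 ltxx.
- have /negbTE-> : (f i i.+1).2 != (f i.+1 i.+2).1.
    by apply/eqP => e; apply: lt_pair_cycle lt0 lt1 e e0.
  have /negbTE-> // : (f i.+1 i.+2).2 != (f i.+2 i.+3).1.
  by apply/eqP => e; apply: lt_pair_cycle lt1 lt2 e e1.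
Qed.

End Family.

Lemma family_chain_or_rev n f (x0 : A) : lt_family n f -> glued_family n f ->
  exists w : seq A, [/\ size w = n, sorted <%O w &
    (forall i j, (i < j < n)%N -> f i j = (nth x0 w i, nth x0 w j)) \/
    (forall i j, (i < j < n)%N -> f i j = (nth x0 w (n - 1 - j), nth x0 w (n - 1 - i)))].
Proof.
move=> f_lt f_glued.
pose fwd i := (f i i.+1).2 == (f i.+1 i.+2).1.
have fwd_const i : (i.+2 < n)%N -> fwd i = fwd 0.
  elim: i => [// | i IHi] lt_in; rewrite -IHi; last lia.
  by rewrite /fwd [RHS](family_orientationS f_lt f_glued).
have [small | big] := leqP n 2.
  have [w [size_w w_sorted fw]] := family_chain f_lt f_glued x0 (fun i lt_in => ltac:(lia)).
  by exists w; split => //; left.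
case fwd0 : (fwd 0).
  have f_step i : (i.+2 < n)%N -> (f i i.+1).2 = (f i.+1 i.+2).1.
    by move=> lt_in; apply/eqP; rewrite -/(fwd i) fwd_const.
  have [w [size_w w_sorted fw]] := family_chain f_lt f_glued x0 f_step.
  by exists w; split => //; left.
pose g i j := f (n.-1 - j) (n.-1 - i).
have g_lt : lt_family n g by move=> i j ijn; apply: f_lt; lia.
have g_glued : glued_family n g.
  by move=> i j k ij jk kn; apply: gluedC; apply: f_glued; lia.
have g_step i : (i.+2 < n)%N -> (g i i.+1).2 = (g i.+1 i.+2).1.
  move=> lt_in; rewrite /g.
  have -> : (n.-1 - i = (n.-1 - i.+2).+2)%N by lia.
  have -> : (n.-1 - i.+1 = (n.-1 - i.+2).+1)%N by lia.
  have [[e _] | [e _] //] := f_glued _ _ _ (ltnSn (n.-1 - i.+2)) (ltnSn _) ltac:(lia).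
  by move: (fwd_const (n.-1 - i.+2)%N ltac:(lia)); rewrite fwd0 /fwd e eqxx.
have [w [size_w w_sorted gw]] := family_chain g_lt g_glued x0 g_step.
exists w; split => //; right => i j ijn.
have -> : f i j = g (n.-1 - j) (n.-1 - i) by rewrite /g; congr f; lia.
by rewrite gw; [congr pair; congr nth; lia | lia].
Qed.

Definition lt_pairs F := forall x y, x < y -> (F x y).1 < (F x y).2.

Definition glued_pairs F := forall x y z, x < y -> y < z -> glued (F x y) (F y z) (F x z).

Section Transport.
Context {F : A -> A -> A * A} (x0 : A) {u : seq A}.
Hypothesis u_sorted : sorted <%O u.

Lemma sorted_nth_lt {i j} : (i < j < size u)%N -> nth x0 u i < nth x0 u j.
Proof. by move=> /andP[ij ju]; rewrite (lt_sorted_ltn_nth x0 u_sorted) ?inE // (ltn_trans ij ju). Qed.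

Definition transported_to (w : seq A) : Prop :=
  (forall i j, (i < j < size u)%N -> F (nth x0 u i) (nth x0 u j) = (nth x0 w i, nth x0 w j)) \/
  (forall i j, (i < j < size u)%N ->
     F (nth x0 u i) (nth x0 u j) = (nth x0 w (size u - 1 - j), nth x0 w (size u - 1 - i))).

Lemma glued_transport : lt_pairs F -> glued_pairs F ->
  exists w, [/\ size w = size u, sorted <%O w & transported_to w].
Proof.
move=> F_lt F_glued; apply: family_chain_or_rev => [i j ijn | i j k ij jk kn].
  exact/F_lt/sorted_nth_lt.
by apply: F_glued; apply: sorted_nth_lt; lia.
Qed.

Lemma transported_mem {w} : size w = size u -> transported_to w ->
  {in u &, forall x y, x < y -> (F x y).1 \in w /\ (F x y).2 \in w}.
Proof.
move=> size_w Fw x y xu yu xy.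
have ix : (index x u < size u)%N by rewrite index_mem.
have iy : (index y u < size u)%N by rewrite index_mem.
have ixy : (index x u < index y u)%N.
  by rewrite -(lt_sorted_ltn_nth x0 u_sorted) ?inE // !nth_index.
have Exy : F x y = F (nth x0 u (index x u)) (nth x0 u (index y u)) by rewrite !nth_index.
have ixyu : (index x u < index y u < size u)%N by rewrite ixy iy.
by rewrite Exy; case: Fw => /(_ _ _ ixyu) -> /=; split; apply: mem_nth; rewrite size_w //; lia.
Qed.

End Transport.

End GluedPairs.

Section MaximalChains.
Context {dd : Order.disp_t} {A : finPOrderType dd}.
Implicit Types (s u w : seq A).

Lemma sorted_comparable {s x y} : sorted <%O s -> x \in s -> y \in s -> x >=< y.
Proof.
move=> s_sorted xs ys; rewrite -(nth_index x xs) -(nth_index x ys).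
have ix : (index x s < size s)%N by rewrite index_mem.
have iy : (index y s < size s)%N by rewrite index_mem.
have mono := lt_sorted_ltn_nth x s_sorted.
case: (ltngtP (index x s) (index y s)) => [lt_xy | lt_yx | ->]; last exact: comparablexx.
  by apply/orP; left; apply/ltW; rewrite mono.
by apply/orP; right; apply/ltW; rewrite mono.
Qed.

Lemma max_chain_size {u w} : max_chain u -> sorted <%O w -> {subset u <= w} ->
  (size w <= size u)%N.
Proof.
move=> [_ u_max] w_sorted uw; apply: uniq_leq_size.
  by move: w_sorted; rewrite lt_sorted_uniq_le => /andP[].
move=> y yw; apply/negPn/negP => /u_max[x xu].
by rewrite (sorted_comparable w_sorted yw (uw x xu)).
Qed.

Lemma sorted_insert {w z} : sorted <%O w -> z \notin w -> {in w, forall y, z >=< y} ->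
  exists w', [/\ sorted <%O w', size w' = (size w).+1 & {subset w <= w'}].
Proof.
move=> w_sorted zw z_comp; pose w' := sort <=%O (z :: w).
have w'_perm : perm_eq w' (z :: w) by rewrite perm_sort.
have total_zw : {in z :: w &, total (<=%O : rel A)}.
  move=> x y; rewrite !inE => /predU1P[-> | xw] /predU1P[-> | yw].
  - by rewrite lexx.
  - exact: z_comp.
  - by rewrite orbC; apply: z_comp.
  - exact: (sorted_comparable w_sorted).
exists w'; split.
- rewrite lt_sorted_uniq_le (perm_uniq w'_perm) /= zw.
  move: w_sorted; rewrite lt_sorted_uniq_le => /andP[-> _].
  by apply: (sort_sorted_in total_zw); apply/allP.
- by rewrite (perm_size w'_perm).
- by move=> y yw; rewrite (perm_mem w'_perm) inE yw orbT.
Qed.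

Lemma transport_max_chain {F G : A -> A -> A * A} {u w} :
  lt_pairs F -> lt_pairs G -> glued_pairs G ->
  (forall x y, x < y -> G (F x y).1 (F x y).2 = (x, y)) ->
  (1 < size u)%N -> max_chain u -> sorted <%O w -> size w = size u ->
  {in u &, forall x y, x < y -> (F x y).1 \in w /\ (F x y).2 \in w} ->
  max_chain w.
Proof.
move=> F_lt G_lt G_glued GF u_gt1 u_max w_sorted size_w Fuw; split=> // z zw.
have [z_comp | /allPn[y yw z_y]] := boolP (all (fun y => z >=< y) w); last by exists y.
exfalso; have [w' [w'_sorted size_w' ww']] := sorted_insert w_sorted zw (allP z_comp).
have [u' [size_u' u'_sorted Gw']] := glued_transport z w'_sorted G_lt G_glued.
have pair_in_u' x y : x \in u -> y \in u -> x < y -> x \in u' /\ y \in u'.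
  move=> xu yu xy; have [Fx Fy] := Fuw x y xu yu xy.
  have := transported_mem z w'_sorted size_u' Gw' _ _ (ww' _ Fx) (ww' _ Fy) (F_lt x y xy).
  by rewrite GF.
have uu' : {subset u <= u'}.
  have u_uniq : uniq u by move: u_max => [+ _]; rewrite lt_sorted_uniq_le => /andP[].
  move=> x xu; have /hasP[y yu /= y_neq_x] : has (predC1 x) u.
    apply/hasPn => all_x; move: u_gt1; rewrite ltnNge => /negP; apply.
    by apply: (uniq_leq_size (s2 := [:: x]) u_uniq) => y /all_x /negPn; rewrite inE.
  case: (comparable_ltgtP (sorted_comparable u_max.1 xu yu)) => [xy | yx | eq_xy].
  - by case: (pair_in_u' x y xu yu xy).
  - by case: (pair_in_u' y x yu xu yx).
  - by rewrite eq_xy eqxx in y_neq_x.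
have := max_chain_size u_max u'_sorted uu'.
by rewrite size_u' size_w' size_w ltnn.
Qed.

End MaximalChains.

Section IncidenceAlgebra.
Context {d : Order.disp_t} {T : finPOrderType d} {K : fieldType}.
Local Open Scope ring_scope.
Local Notation E := (eI K).
Local Notation zero := (fun _ _ : T => 0 : K).
Implicit Types (f g : T -> T -> K) (a b c e u v x y : T).

Lemma funext2 f g : (forall x y, f x y = g x y) -> f = g.
Proof. by move=> fg; do 2![apply: functional_extensionality => ?]; apply: fg. Qed.

Lemma inI0 : inI zero.
Proof. by []. Qed.

Definition diagonal f := forall a b, a != b -> f a b = 0.

Lemma inI_eI {x y} : (x <= y)%O -> inI (E x y).
Proof. by move=> xy u v; rewrite /eI; case: andP => // [[/eqP-> /eqP->]]; rewrite xy. Qed.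

Lemma inI_scale (k : K) {f} : inI f -> inI (fun u v => k * f u v).
Proof. by move=> f_in u v uv; rewrite f_in // mulr0. Qed.

Lemma inI_lie {f g} : inI f -> inI g -> inI (lieI f g).
Proof.
move=> f_in g_in a b ab; rewrite /lieI /mulI !big1 ?subrr // => t /andP[a_t t_b];
by have := le_trans a_t t_b; rewrite (negbTE ab).
Qed.

Lemma eI_neq0 a b u v : E a b u v != 0 -> u = a /\ v = b.
Proof. by rewrite /eI; case: andP => [[/eqP-> /eqP->] | ]; rewrite ?eqxx. Qed.

Lemma eI_id a b : E a b a b = 1.
Proof. by rewrite /eI !eqxx. Qed.

Lemma eI_off a b u v : u != a -> E a b u v = 0.
Proof. by rewrite /eI => /negbTE->. Qed.

Lemma eI_diagonal (s : T) : diagonal (E s s).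
Proof.
move=> a b ab; rewrite /eI; have [a_s | //] := eqVneq a s.
by rewrite -a_s eq_sym (negbTE ab).
Qed.

Lemma eI_diagE (s t : T) : E s s t t = (t == s)%:R.
Proof. by rewrite /eI andbb; case: (t == s). Qed.

Lemma lie_scale (k l : K) f g :
  lieI (fun u v => k * f u v) (fun u v => l * g u v) = (fun u v => k * l * lieI f g u v).
Proof.
apply: funext2 => u v; rewrite /lieI /mulI mulrBr !mulr_sumr.
by congr (_ - _); apply: eq_bigr => t _; rewrite mulrACA // [l * k]mulrC mulrACA.
Qed.

Lemma lie_diag {f g} a b : diagonal f -> inI g -> lieI f g a b = (f a a - f b b) * g a b.
Proof.
move=> f_diag g_in; rewrite /lieI /mulI mulrBl [f b b * _]mulrC.
have [ab | nab] := boolP (a <= b)%O; last first.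
  rewrite g_in // mulr0 mul0r subrr !big1 ?subrr // => t /andP[a_t t_b];
  by have := le_trans a_t t_b; rewrite (negbTE nab).
rewrite (bigD1 a) ?lexx ?ab //= [X in _ - X](bigD1 b) ?lexx ?ab //=.
rewrite !big1 ?addr0 // => t /andP[_ tx]; rewrite f_diag ?(mul0r, mulr0) //.
by rewrite eq_sym.
Qed.

Lemma mul_eI a b c e : (a <= b)%O -> (c <= e)%O ->
  mulI (E a b) (E c e) = (fun u v => if b == c then E a e u v else 0).
Proof.
move=> ab ce; apply: funext2 => u v; rewrite /mulI.
have term t : E a b u t * E c e t v = if t == b then (if b == c then E a e u v else 0) else 0.
  rewrite /eI; case: (eqVneq t b) => [-> | tb]; last by rewrite andbF mul0r.
  by case: (u == a); case: (b == c); case: (v == e); rewrite /= ?mulr1 ?mulr0 ?mul0r.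
under eq_bigr do rewrite term.
have [ubv | n_ubv] := boolP ((u <= b)%O && (b <= v)%O).
  by rewrite (bigD1 b) //= eqxx big1 ?addr0 // => t /andP[_ /negbTE ->].
rewrite big1 => [| t t_uv]; last by case: eqP => // tb; rewrite -tb t_uv in n_ubv.
case: (eqVneq b c) => // bc; subst c.
have [-> // | /eI_neq0[ua ve]] := eqVneq (E a e u v) 0.
by rewrite ua ve ab ce in n_ubv.
Qed.

Lemma lie_eI_glued (p q r : T * T) : (p.1 < p.2)%O -> (q.1 < q.2)%O ->
  lieI (E p.1 p.2) (E q.1 q.2) r.1 r.2 != 0 -> glued p q r.
Proof.
case: p q r => [a b] [c e] [x y] /= ab ce; rewrite /lieI !mul_eI ?ltW //.
have [bc | bc] := eqVneq b c.
  subst c.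
  have [ea | _] := eqVneq e a; first by have := lt_trans ab ce; rewrite ea ltxx.
  by rewrite subr0 => /eI_neq0[-> ->]; left.
have [-> | _] := eqVneq e a; last by rewrite subrr eqxx.
by rewrite sub0r oppr_eq0 => /eI_neq0[-> ->]; right.
Qed.

Lemma lie_eI_comp a b c : (a <= b)%O -> (b <= c)%O -> (a < c)%O -> lieI (E a b) (E b c) = E a c.
Proof.
by move=> ab bc ac; apply: funext2 => u v; rewrite /lieI !mul_eI // eqxx (gt_eqF ac) subr0.
Qed.

Lemma theta_scaled_eI {phi : (T -> T -> K) -> T -> T -> K} {x y a b} {k : K} :
  (a < b)%O -> k != 0 -> phi (E x y) = (fun u v => k * E a b u v) -> theta phi x y = Some (a, b).
Proof.
move=> ab k_neq0 phi_xy; rewrite /theta phi_xy.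
have supp p : k * E a b p.1 p.2 != 0 -> p = (a, b).
  by rewrite mulf_eq0 negb_or => /andP[_ /eI_neq0[<- <-]]; case: p.
case: pickP => [p /and3P[_ /supp -> //] | none].
have := none (a, b); rewrite /= ab /eI !eqxx mulr1 k_neq0 /=.
move/negbT/negP; case; apply/forallP => q; apply/implyP => qab.
by apply: contraR qab => /supp ->.
Qed.

(* In characteristic 2 we have -1 = 1, so (u, v) = (b, a) cannot be excluded. *)
Lemma weight_support {a b u v} : a != b ->
  E a a u u - E a a v v = 1 -> E b b u u - E b b v v = -1 -> (u = a /\ v = b) \/ (u = b /\ v = a).
Proof.
rewrite !eI_diagE => ab h_a h_b.
have a_uv : (u == a) || (v == a).
  apply/norP => -[/negbTE ua /negbTE va].
  by move: h_a; rewrite ua va subrr => /eqP; rewrite eq_sym oner_eq0.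
have b_uv : (u == b) || (v == b).
  apply/norP => -[/negbTE ub /negbTE vb].
  by move: h_b; rewrite ub vb subrr => /eqP; rewrite eq_sym oppr_eq0 oner_eq0.
case/orP: a_uv => /eqP ua; case/orP: b_uv => /eqP ub.
- by move: ab; rewrite -ua -ub eqxx.
- by left.
- by right.
- by move: ab; rewrite -ua -ub eqxx.
Qed.

Section LieAutomorphism.
Context {phi : (T -> T -> K) -> T -> T -> K}.
Hypothesis phi_aut : is_lie_aut phi.

Lemma phi_in {f} : inI f -> inI (phi f).
Proof. by case: phi_aut => + _ _ _ _; apply. Qed.

Lemma phi_linear (k : K) {f g} : inI f -> inI g ->
  phi (fun u v => k * f u v + g u v) = (fun u v => k * phi f u v + phi g u v).
Proof. by case: phi_aut => _ + _ _ _; apply. Qed.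

Lemma phi_inj {f g} : inI f -> inI g -> phi f = phi g -> f = g.
Proof. by case: phi_aut => _ _ + _ _; apply. Qed.

Lemma phi_surj {g} : inI g -> exists f, inI f /\ phi f = g.
Proof. by case: phi_aut => _ _ _ + _; apply. Qed.

Lemma phi_lie {f g} : inI f -> inI g -> phi (lieI f g) = lieI (phi f) (phi g).
Proof. by case: phi_aut => _ _ _ _; apply. Qed.

Lemma phi0 : phi zero = zero.
Proof.
have := phi_linear 1 inI0 inI0.
have -> : (fun u v : T => 1 * 0 + 0) = zero :> (T -> T -> K) by apply: funext2 => u v; rewrite addr0 mulr0.
move=> /(congr1 (fun h => h _ _)) phi0_eq; apply: funext2 => u v.
by have := esym (phi0_eq u v); rewrite mul1r => /(canRL (addrK _)); rewrite subrr.
Qed.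

Lemma phiZ (k : K) {f} : inI f -> phi (fun u v => k * f u v) = (fun u v => k * phi f u v).
Proof.
move=> f_in; have := phi_linear k f_in inI0; rewrite phi0.
have -> : (fun u v => k * f u v + 0) = (fun u v => k * f u v) by apply: funext2 => u v; rewrite addr0.
by move=> ->; apply: funext2 => u v; rewrite addr0.
Qed.

Lemma inI_sum (I : eqType) (r : seq I) (c : I -> K) (F : I -> T -> T -> K) :
  (forall i, i \in r -> inI (F i)) -> inI (fun a b => \sum_(i <- r) c i * F i a b).
Proof. by move=> F_in a b ab; rewrite big1_seq // => i /andP[_ /F_in ->]; rewrite ?mulr0. Qed.

Lemma phi_sum (I : eqType) (r : seq I) (c : I -> K) (F : I -> T -> T -> K) :
  (forall i, i \in r -> inI (F i)) ->
  phi (fun a b => \sum_(i <- r) c i * F i a b) = (fun a b => \sum_(i <- r) c i * phi (F i) a b).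
Proof.
elim: r => [_ | i r IHr F_in].
  have -> : (fun a b => \sum_(i <- [::]) c i * F i a b) = zero by apply: funext2 => a b; rewrite big_nil.
  by rewrite phi0; apply: funext2 => a b; rewrite big_nil.
have F_in_r j : j \in r -> inI (F j) by move=> jr; apply: F_in; rewrite inE jr orbT.
have -> : (fun a b => \sum_(j <- i :: r) c j * F j a b) =
          (fun a b => c i * F i a b + (fun a b => \sum_(j <- r) c j * F j a b) a b).
  by apply: funext2 => a b; rewrite big_cons.
rewrite phi_linear ?IHr; first by apply: funext2 => a b; rewrite big_cons.
- by [].
- by apply: F_in; rewrite mem_head.
- exact: inI_sum.
Qed.

Definition incidence_pairs : seq (T * T) := [seq p <- enum {: T * T} | (p.1 <= p.2)%O].

Lemma inI_expand {f} : inI f ->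
  f = (fun a b => \sum_(p <- incidence_pairs) f p.1 p.2 * E p.1 p.2 a b).
Proof.
move=> f_in; apply: funext2 => a b.
have [ab | nab] := boolP (a <= b)%O; last first.
  rewrite f_in // big1_seq // => p /andP[_]; rewrite mem_filter => /andP[p_le _].
  have [-> | /eI_neq0[ap bp]] := eqVneq (E p.1 p.2 a b) 0; first by rewrite mulr0.
  by move: nab; rewrite ap bp p_le.
rewrite (bigD1_seq (a, b)) /=; last 2 first.
- by rewrite mem_filter /= ab mem_enum.
- by rewrite filter_uniq // enum_uniq.
rewrite eI_id mulr1 big1 ?addr0 // => p p_ab.
have [-> | /eI_neq0[ap bp]] := eqVneq (E p.1 p.2 a b) 0; first by rewrite mulr0.
by move: p_ab; rewrite [p]surjective_pairing -ap -bp eqxx.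
Qed.

Lemma phi_expand {f} : inI f ->
  phi f = (fun a b => \sum_(p <- incidence_pairs) f p.1 p.2 * phi (E p.1 p.2) a b).
Proof.
move=> f_in; rewrite {1}(inI_expand f_in) phi_sum // => p.
by rewrite mem_filter => /andP[p_le _]; apply: inI_eI.
Qed.

Hypothesis phi_diag : forall x, diagonal (phi (E x x)).
Hypothesis phi_strict : forall x y a, (x < y)%O -> phi (E x y) a a = 0.

Lemma phi_diagonal {f} : inI f -> diagonal f -> diagonal (phi f).
Proof.
move=> f_in f_diag a b ab; rewrite (phi_expand f_in) big1_seq // => p _.
have [p_eq | p_neq] := eqVneq p.1 p.2; last by rewrite f_diag ?mul0r.
by rewrite p_eq phi_diag ?mulr0.
Qed.

Lemma phi_hollow {f} : inI f -> (forall a, f a a = 0) -> forall a, phi f a a = 0.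
Proof.
move=> f_in f_hollow a; rewrite (phi_expand f_in) big1_seq // => p /andP[_].
rewrite mem_filter => /andP[p_le _].
have [p_eq | p_neq] := eqVneq p.1 p.2; first by rewrite p_eq f_hollow mul0r.
by rewrite phi_strict ?mulr0 // lt_neqAle p_neq.
Qed.

Lemma diagonal_preimage s : exists f, [/\ inI f, diagonal f & phi f = E s s].
Proof.
have [f [f_in phi_f]] := phi_surj (inI_eI (lexx s)).
pose f_diag a b := if a == b then f a b else 0.
pose f_off a b := f a b - f_diag a b.
have f_diag_in : inI f_diag by move=> a b ab; rewrite /f_diag f_in // if_same.
have f_off_in : inI f_off by move=> a b ab; rewrite /f_off f_diag_in // f_in // subr0.
have f_split : f = (fun a b => 1 * f_off a b + f_diag a b).
  by apply: funext2 => a b; rewrite mul1r subrK.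
have phi_f_diag : diagonal (phi f_diag).
  by apply: phi_diagonal => // c e /negbTE ce; rewrite /f_diag ce.
have phi_off0 : phi f_off = phi zero.
  rewrite phi0; apply: funext2 => a b; have [-> | ab] := eqVneq a b.
    by apply: phi_hollow => // c; rewrite /f_off /f_diag eqxx subrr.
  have /(congr1 (fun h => h a b)) := phi_f.
  rewrite f_split phi_linear // mul1r phi_f_diag // addr0 => ->.
  rewrite /eI; have [a_s | //] := eqVneq a s; have [b_s | //] := eqVneq b s.
  by rewrite a_s b_s eqxx in ab.
have f_off0 := phi_inj f_off_in inI0 phi_off0.
exists f; split=> // a b ab.
by have := congr1 (fun h => h a b) f_off0; rewrite /f_off /f_diag (negbTE ab) subr0.
Qed.

Lemma phi_eI_weight {x y} s : (x <= y)%O -> exists c : K,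
  forall u v, (E s s u u - E s s v v) * phi (E x y) u v = c * phi (E x y) u v.
Proof.
move=> xy; have [f [f_in f_diag phi_f]] := diagonal_preimage s.
exists (f x x - f y y) => u v.
have lie_f : lieI f (E x y) = (fun a b => (f x x - f y y) * E x y a b).
  apply: funext2 => a b; rewrite (lie_diag _ _ f_diag (inI_eI xy)).
  by have [-> | /eI_neq0[-> ->]] := eqVneq (E x y a b) 0; rewrite ?mulr0.
have := congr1 (fun h => h u v) (phi_lie f_in (inI_eI xy)).
rewrite lie_f (phiZ _ (inI_eI xy)) phi_f (lie_diag _ _ (eI_diagonal s) (phi_in (inI_eI xy))).
by move=> ->.
Qed.

Lemma phi_eI_neq0 {x y} : (x <= y)%O -> exists p : T * T, phi (E x y) p.1 p.2 != 0.
Proof.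
move=> xy; have [/forallP all0 | /forallPn[p p_neq0]] :=
  boolP [forall p : T * T, phi (E x y) p.1 p.2 == 0]; last by exists p.
have : phi (E x y) = phi zero by rewrite phi0; apply: funext2 => a b; apply/eqP: (all0 (a, b)).
move=> /(phi_inj (inI_eI xy) inI0) /(congr1 (fun h => h x y)) /eqP.
by rewrite eI_id oner_eq0.
Qed.

Lemma phi_eI_scaled {x y} : (x < y)%O ->
  exists a b (k : K), [/\ (a < b)%O, k != 0 & phi (E x y) = (fun u v => k * E a b u v)].
Proof.
move=> xy; have [[a b] /= gab] := phi_eI_neq0 (ltW xy).
set g := phi (E x y) in gab *.
have g_in : inI g := phi_in (inI_eI (ltW xy)).
have ab : (a < b)%O.
  rewrite lt_neqAle; apply/andP; split; last by apply: contraNT gab => /g_in ->.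
  by apply: contraNneq gab => ->; rewrite /g phi_strict.
have [ca weight_a] := phi_eI_weight a (ltW xy).
have [cb weight_b] := phi_eI_weight b (ltW xy).
have ca1 : ca = 1.
  by apply: (mulIf gab); rewrite -weight_a eI_id eI_off ?gt_eqF // subr0.
have cbN1 : cb = -1.
  by apply: (mulIf gab); rewrite -weight_b eI_id eI_off ?lt_eqF // sub0r mulN1r.
have supp u v : g u v != 0 -> u = a /\ v = b.
  move=> guv; have wa := weight_a u v; have wb := weight_b u v.
  rewrite ca1 in wa; rewrite cbN1 in wb.
  have [// | [ub va]] := weight_support (negbT (lt_eqF ab)) (mulIf guv wa) (mulIf guv wb).
  by move: guv; rewrite ub va g_in ?eqxx // lt_geF.
exists a, b, (g a b); split => //.
apply: funext2 => u v; have [g0 | /supp[-> ->]] := eqVneq (g u v) 0; last by rewrite eI_id mulr1.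
rewrite g0; have [-> | /eI_neq0[ua vb]] := eqVneq (E a b u v) 0; first by rewrite mulr0.
by rewrite -ua -vb g0 eqxx in gab.
Qed.

Definition theta_pair x y : T * T := odflt (x, y) (theta phi x y).

Lemma theta_pairP {x y} : (x < y)%O ->
  [/\ ((theta_pair x y).1 < (theta_pair x y).2)%O, theta phi x y = Some (theta_pair x y) &
    exists2 k : K, k != 0 &
      phi (E x y) = (fun u v => k * E (theta_pair x y).1 (theta_pair x y).2 u v)].
Proof.
move=> xy; have [a [b [k [ab k_neq0 phi_xy]]]] := phi_eI_scaled xy.
by rewrite /theta_pair (theta_scaled_eI ab k_neq0 phi_xy); split => //; exists k.
Qed.

Lemma theta_pair_lt : lt_pairs theta_pair.
Proof. by move=> x y /theta_pairP[]. Qed.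

Lemma theta_pair_glued : glued_pairs theta_pair.
Proof.
move=> x y z xy yz; have xz := lt_trans xy yz.
have [lt_xy _ [k1 _ phi_xy]] := theta_pairP xy.
have [lt_yz _ [k2 _ phi_yz]] := theta_pairP yz.
have [_ _ [k3 k3_neq0 phi_xz]] := theta_pairP xz.
apply: lie_eI_glued => //.
have := congr1 (fun h => h (theta_pair x z).1 (theta_pair x z).2)
                (phi_lie (inI_eI (ltW xy)) (inI_eI (ltW yz))).
rewrite lie_eI_comp ?ltW // phi_xz phi_xy phi_yz lie_scale eI_id mulr1 => k3_eq.
by apply: contraNneq k3_neq0 => lie0; rewrite k3_eq lie0 mulr0.
Qed.

(* Extended by the identity off the strict pairs, so that on the finite type T * T
   injectivity yields the inverse theta_pair_inv. *)
Definition theta_pair_ext (p : T * T) : T * T :=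
  if (p.1 < p.2)%O then theta_pair p.1 p.2 else p.

Lemma theta_pair_ext_inj : injective theta_pair_ext.
Proof.
have strict_inj p q : (p.1 < p.2)%O -> (q.1 < q.2)%O ->
    theta_pair p.1 p.2 = theta_pair q.1 q.2 -> p = q.
  move=> p_lt q_lt pq.
  have [_ _ [k1 k1_neq0 phi_p]] := theta_pairP p_lt.
  have [_ _ [k2 k2_neq0 phi_q]] := theta_pairP q_lt.
  have p_in := inI_eI (ltW p_lt); have q_in := inI_eI (ltW q_lt).
  have : phi (fun u v => k2 * E p.1 p.2 u v) = phi (fun u v => k1 * E q.1 q.2 u v).
    by rewrite !phiZ // phi_p phi_q pq; apply: funext2 => u v; rewrite !mulrA [k1 * k2]mulrC.
  move=> /(phi_inj (inI_scale _ p_in) (inI_scale _ q_in)) /(congr1 (fun h => h p.1 p.2)).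
  rewrite eI_id mulr1 => k2_eq.
  have : E q.1 q.2 p.1 p.2 != 0 by apply: contraNneq k2_neq0 => E0; rewrite k2_eq E0 mulr0.
  by case/eI_neq0 => p1 p2; rewrite [p]surjective_pairing [q]surjective_pairing p1 p2.
move=> p q; rewrite /theta_pair_ext.
have [p_lt | p_nlt] := boolP (p.1 < p.2)%O; have [q_lt | q_nlt] := boolP (q.1 < q.2)%O => //.
- exact: strict_inj.
- by move=> pq; have := theta_pair_lt _ _ p_lt; rewrite pq (negbTE q_nlt).
- by move=> pq; have := theta_pair_lt _ _ q_lt; rewrite -pq (negbTE p_nlt).
Qed.

Definition theta_pair_inv x y : T * T := invF theta_pair_ext_inj (x, y).

Lemma theta_pair_invP {a b} : (a < b)%O ->
  ((theta_pair_inv a b).1 < (theta_pair_inv a b).2)%O /\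
  theta_pair (theta_pair_inv a b).1 (theta_pair_inv a b).2 = (a, b).
Proof.
move=> ab; have := f_invF theta_pair_ext_inj (a, b).
rewrite -/(theta_pair_inv a b) /theta_pair_ext.
by case: ifP => [// | p_nlt p_ab]; rewrite p_ab /= ab in p_nlt.
Qed.

Lemma theta_pairK x y : (x < y)%O ->
  theta_pair_inv (theta_pair x y).1 (theta_pair x y).2 = (x, y).
Proof.
move=> xy; rewrite /theta_pair_inv -surjective_pairing.
have <- : theta_pair_ext (x, y) = theta_pair x y by rewrite /theta_pair_ext /= xy.
exact: invF_f.
Qed.

Lemma theta_pair_inv_lt : lt_pairs theta_pair_inv.
Proof. by move=> a b /theta_pair_invP[]. Qed.

Lemma theta_pair_inv_glued : glued_pairs theta_pair_inv.
Proof.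
move=> a b c ab bc; have ac := lt_trans ab bc.
set p := theta_pair_inv a b; set q := theta_pair_inv b c; set r := theta_pair_inv a c.
have [p_lt tp_p] := theta_pair_invP ab.
have [q_lt tp_q] := theta_pair_invP bc.
have [r_lt tp_r] := theta_pair_invP ac.
have [_ _ [k1 k1_neq0 phi_p]] := theta_pairP p_lt.
have [_ _ [k2 k2_neq0 phi_q]] := theta_pairP q_lt.
have [_ _ [k3 k3_neq0 phi_r]] := theta_pairP r_lt.
rewrite -/p -/q -/r tp_p /= in phi_p; rewrite -/p -/q -/r tp_q /= in phi_q.
rewrite -/p -/q -/r tp_r /= in phi_r.
have p_in := inI_eI (ltW p_lt); have q_in := inI_eI (ltW q_lt); have r_in := inI_eI (ltW r_lt).
have lie_pq : phi (lieI (E p.1 p.2) (E q.1 q.2)) = phi (fun u v => k1 * k2 / k3 * E r.1 r.2 u v).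
  rewrite phi_lie // phi_p phi_q lie_scale lie_eI_comp ?ltW // phiZ // phi_r.
  by apply: funext2 => u v; rewrite mulrA divfK.
apply: lie_eI_glued => //.
have := congr1 (fun h => h r.1 r.2) (phi_inj (inI_lie p_in q_in) (inI_scale _ r_in) lie_pq).
by rewrite eI_id mulr1 => ->; rewrite !mulf_neq0 ?invr_eq0.
Qed.

End LieAutomorphism.

End IncidenceAlgebra.

Section ChainLength.
Context {d : Order.disp_t} {T : finPOrderType d}.

Lemma lng_xx (a : T) : lng a a = 0%N.
Proof.
rewrite /lng; suff : (\max_(S : {set T} | chain_in a a S) #|S| <= 1)%N.
  by case: (\max_(S | _) _) => [|[]].
apply/bigmax_leqP => S /andP[_ /forallP S_in]; rewrite -(cards1 a).
apply/subset_leq_card/subsetP => x xS; move/implyP: (S_in x) => /(_ xS) /andP[ax xa].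
by rewrite inE; apply/eqP/le_anti; rewrite ax xa.
Qed.

Lemma lng_gt0 (a b : T) : a < b -> (0 < lng a b)%N.
Proof.
move=> ab; rewrite /lng.
have ab_chain : chain_in a b [set a; b].
  apply/andP; split; apply/forallP => x; last first.
    by rewrite !inE; apply/implyP => /orP[] /eqP->; rewrite ?lexx ?(ltW ab).
  apply/forallP => y; apply/implyP; rewrite !inE => /orP[] /eqP->; apply/implyP => /orP[] /eqP->;
  by rewrite /Order.comparable ?lexx ?(ltW ab) ?orbT.
have := @leq_bigmax_cond _ (chain_in a b) (fun S : {set T} => #|S|) _ ab_chain.
by rewrite cards2 (lt_eqF ab); case: (\max_(S | _) _) => [|[|n]].
Qed.

End ChainLength.

Lemma elementaryP {d : Order.disp_t} {T : finPOrderType d} {K : fieldType}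
    (phi : (T -> T -> K) -> T -> T -> K) :
  elementary phi -> [/\ is_lie_aut phi, forall x, diagonal (phi (eI K x x)) &
    forall x y a, x < y -> phi (eI K x y) a a = 0%R].
Proof.
move=> [phi_aut [psi [_ phi_psi]]]; split=> // [x a b ab | x y a xy].
  rewrite phi_psi // /compL lng_xx; case: (boolP (a <= b)) => //= a_le_b.
  by rewrite eqn0Ngt lng_gt0 // lt_neqAle ab.
by rewrite phi_psi ?(ltW xy) // /compL lng_xx eq_sym eqn0Ngt lng_gt0 // andbF.
Qed.

Theorem lemma5p4 (d : Order.disp_t) (T : finPOrderType d) (K : fieldType)
  (phi : (T -> T -> K) -> (T -> T -> K)) :
  connectedP T -> elementary phi ->
  forall (x0 : T) (u : seq T), max_chain u ->
  exists v : seq T, [/\ max_chain v, size v = size u &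
    ((forall i j, (i < j < size u)%N ->
        theta phi (nth x0 u i) (nth x0 u j) = Some (nth x0 v i, nth x0 v j))
     \/
     (forall i j, (i < j < size u)%N ->
        theta phi (nth x0 u i) (nth x0 u j)
        = Some (nth x0 v (size u - 1 - j), nth x0 v (size u - 1 - i))))].
Proof.
move=> _ /elementaryP[phi_aut phi_diag phi_strict] x0 u u_max.
have [u_small | u_gt1] := leqP (size u) 1.
  by exists u; split => //; left => i j; lia.
have theta_lt := theta_pair_lt phi_aut phi_diag phi_strict.
have theta_glued := theta_pair_glued phi_aut phi_diag phi_strict.
have theta_inv_lt := theta_pair_inv_lt phi_aut phi_diag phi_strict.
have theta_inv_glued := theta_pair_inv_glued phi_aut phi_diag phi_strict.
have [w [size_w w_sorted u_to_w]] := glued_transport x0 u_max.1 theta_lt theta_glued.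
exists w; split => //.
  apply: (transport_max_chain theta_lt theta_inv_lt theta_inv_glued
            (theta_pairK phi_aut phi_diag phi_strict) u_gt1 u_max w_sorted size_w).
  by move=> x y; apply: (transported_mem x0 u_max.1 size_w u_to_w).
case: u_to_w => u_w; [left | right] => i j ij; rewrite -u_w //;
  by have [] := theta_pairP phi_aut phi_diag phi_strict (sorted_nth_lt x0 u_max.1 ij).
Qed.
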